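(* Let $H$ be a nonempty graph, let $s\ge 0$ and $t\ge 1$ be integers. Then $\hat r(tK_2,H\cup sK_1)=\hat r(tK_2,H)$. In particular, $\hat r_\infty(H\cup sK_1)=\hat r_\infty(H)$.
   Context: All graphs are finite and simple; a graph is nonempty if it has at least one edge. $G\cup H$ is the disjoint union, $tK_2$ is a matching with $t$ edges, $sK_1$ is the edgeless graph on $s$ vertices. For graphs $F,G,H$, $F\to(G,H)$ means every red--blue coloring of $E(F)$ contains a red copy of $G$ or a blue copy of $H$, and $\hat r(G,H)=\min\{|E(F)|:F\to(G,H)\}$. For a nonempty graph $G$, $\hat r_\infty(G)=\lim_{t\to\infty}\frac{\hat r(tK_2,G)}{t\,|E(G)|}$ (this limit exists). *)

From Stdlib Require Import Reals.
From Coquelicot Require Import Rbar Lim_seq.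
From mathcomp Require Import all_boot.
From mathcomp Require Import boolp.

Set Implicit Arguments.
Unset Strict Implicit.
Unset Printing Implicit Defensive.

Record graph := Graph {
  gn : nat;
  gadj : rel 'I_gn;
  gsym : symmetric gadj;
  girr : irreflexive gadj }.

Definition nedges (G : graph) : nat :=
  #|[set p : 'I_(gn G) * 'I_(gn G) | (p.1 < p.2)%N && gadj p.1 p.2]|.

(* Matching tK_2 on 'I_(2t): vertices 2i and 2i+1 adjacent. *)
Definition matching_adj (t : nat) : rel 'I_(t.*2) :=
  fun x y => (x./2 == y./2) && (x != y).

Lemma matching_sym t : symmetric (@matching_adj t).
Proof. by move=> x y; rewrite /matching_adj eq_sym [y == x]eq_sym. Qed.

Lemma matching_irr t : irreflexive (@matching_adj t).
Proof. by move=> x; rewrite /matching_adj !eqxx. Qed.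

Definition matching (t : nat) : graph :=
  @Graph t.*2 (@matching_adj t) (@matching_sym t) (@matching_irr t).

(* H ∪ sK_1 : H plus s isolated vertices, on 'I_(gn H + s). *)
Definition addiso_adj (H : graph) (s : nat) : rel 'I_(gn H + s) :=
  fun x y => match split x, split y with
             | inl a, inl b => gadj a b
             | _, _ => false
             end.

Lemma addiso_sym H s : symmetric (@addiso_adj H s).
Proof.
move=> x y; rewrite /addiso_adj.
by case: (split x) => a; case: (split y) => b //; apply: gsym.
Qed.

Lemma addiso_irr H s : irreflexive (@addiso_adj H s).
Proof. by move=> x; rewrite /addiso_adj; case: (split x) => a //; apply: girr. Qed.

Definition add_isolated (H : graph) (s : nat) : graph :=
  @Graph (gn H + s) (@addiso_adj H s) (@addiso_sym H s) (@addiso_irr H s).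

(* A red/blue colouring of E(F): c x y (true = red), required symmetric;
   only its values on edges of F matter. *)
Definition mono_copy (F G : graph) (c : 'I_(gn F) -> 'I_(gn F) -> bool)
  (b : bool) : Prop :=
  exists f : 'I_(gn G) -> 'I_(gn F), injective f /\
    forall x y, gadj x y -> gadj (f x) (f y) && (c (f x) (f y) == b).

Definition arrows (F G H : graph) : Prop :=
  forall c : 'I_(gn F) -> 'I_(gn F) -> bool,
    (forall x y, c x y = c y x) -> @mono_copy F G c true \/ @mono_copy F H c false.

(* size Ramsey number: min |E(F)| over F with F -> (G,H) (0 if no such F,
   which never happens). *)
Definition sr_pred (G H : graph) : pred nat :=
  fun m => `[< exists F : graph, nedges F = m /\ arrows F G H >].

Definition size_ramsey (G H : graph) : nat :=
  match pselect (exists m, sr_pred G H m) with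
  | left ex => ex_minn ex
  | right _ => 0
  end.

Definition r_infty (G : graph) : Rbar :=
  Lim_seq (fun t => (INR (size_ramsey (matching t) G) /
                     (INR t * INR (nedges G)))%R).

(* Adding s isolated vertices to a graph changes neither its edges nor which
   graphs it is forced into.  If every colouring of F has a red G or a blue H,
   then every colouring of F ∪ sK_1 has a red G or a blue H ∪ sK_1: the
   isolated vertices of H ∪ sK_1 are sent to the s new isolated vertices of
   F.  Conversely a blue H ∪ sK_1 contains a blue H.  Since F and F ∪ sK_1
   have the same number of edges, both size Ramsey problems minimise over the
   same set of edge counts. *)

From Stdlib Require Import Reals.
From Coquelicot Require Import Rbar Lim_seq.
From mathcomp Require Import all_boot.
From mathcomp Require Import boolp.

Lemma split_lshift m n (i : 'I_m) : split (lshift n i) = inl i.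
Proof. exact: (@unsplitK m n (inl i)). Qed.

Section AddIsolated.

Variables (H : graph) (s : nat).

Lemma add_isolated_adj_lshift (a b : 'I_(gn H)) :
  @gadj (add_isolated H s) (lshift s a) (lshift s b) = gadj a b.
Proof. by rewrite /= /addiso_adj !split_lshift. Qed.

Lemma add_isolated_adjP (x y : 'I_(gn (add_isolated H s))) :
  gadj x y -> exists a b, [/\ x = lshift s a, y = lshift s b & gadj a b].
Proof.
rewrite /= /addiso_adj -{2}(splitK x) -{2}(splitK y).
by case: (split x) => a //; case: (split y) => b // ab; exists a, b.
Qed.

Lemma nedges_add_isolated : nedges (add_isolated H s) = nedges H.
Proof.
pose f (p : 'I_(gn H) * 'I_(gn H)) := (lshift s p.1, lshift s p.2).
have f_inj : injective f.
  by move=> [a b] [c d] [/val_inj -> /val_inj ->].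
rewrite /nedges -(card_imset _ f_inj); apply: eq_card => -[x y].
rewrite inE /=; apply/andP/imsetP => [[lt_xy /add_isolated_adjP] | ].
- move=> [a [b [Ex Ey ab]]]; move: lt_xy; rewrite Ex Ey => lt_ab.
  by exists (a, b); rewrite // inE /= ab andbT.
- move=> [[a b]]; rewrite inE /= => /andP[lt_ab ab] [-> ->].
  by split => //; rewrite -add_isolated_adj_lshift in ab.
Qed.

End AddIsolated.

Lemma arrows_add_isolated_r (F G H : graph) s :
  arrows F G (add_isolated H s) -> arrows F G H.
Proof.
move=> FGH c c_sym; case: (FGH c c_sym) => [red | [g [g_inj gE]]]; first by left.
right; exists (fun x => g (lshift s x)); split.
  by move=> x y /g_inj /lshift_inj.
by move=> x y xy; apply: gE; rewrite add_isolated_adj_lshift.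
Qed.

Lemma arrows_add_isolated (F G H : graph) s :
  arrows F G H -> arrows (add_isolated F s) G (add_isolated H s).
Proof.
move=> FGH c c_sym.
pose cF (a b : 'I_(gn F)) := c (lshift s a) (lshift s b).
have cF_sym : forall a b, cF a b = cF b a by move=> a b; rewrite /cF c_sym.
case: (FGH cF cF_sym) => [[f [f_inj fE]] | [g [g_inj gE]]].
- left; exists (fun x => lshift s (f x)); split.
    by move=> x y /lshift_inj /f_inj.
  by move=> x y xy; rewrite add_isolated_adj_lshift; apply: fE.
- right.
  pose g' (z : 'I_(gn H + s)) :=
    match split z with inl a => lshift s (g a) | inr b => rshift (gn F) b end.
  exists g'; split.
    move=> x y; rewrite /g' -{2}(splitK x) -{2}(splitK y).
    case: (split x) => a; case: (split y) => b /=.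
    + by move/lshift_inj/g_inj ->.
    + by move/eqP; rewrite eq_lrshift.
    + by move/eqP; rewrite eq_rlshift.
    + by move/rshift_inj ->.
  move=> x y /add_isolated_adjP[a [b [-> -> ab]]].
  by rewrite /g' !split_lshift add_isolated_adj_lshift; apply: gE.
Qed.

Lemma sr_pred_add_isolated G H s : sr_pred G (add_isolated H s) = sr_pred G H.
Proof.
apply/funext => m; apply/asbool_equiv_eq; split => -[F [<- FGH]].
- by exists F; split => //; apply: arrows_add_isolated_r FGH.
- exists (add_isolated F s); split; first exact: nedges_add_isolated.
  exact: arrows_add_isolated.
Qed.

Lemma size_ramsey_add_isolated G H s :
  size_ramsey G (add_isolated H s) = size_ramsey G H.
Proof. by rewrite /size_ramsey sr_pred_add_isolated. Qed.

Theorem lemma2p5 (H : graph) (s : nat) :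
  (0 < nedges H)%N ->
  (forall t : nat, (1 <= t)%N ->
     size_ramsey (matching t) (add_isolated H s) = size_ramsey (matching t) H)
  /\ r_infty (add_isolated H s) = r_infty H.
Proof.
move=> _; split=> [t _|]; first exact: size_ramsey_add_isolated.
rewrite /r_infty nedges_add_isolated.
by congr Lim_seq; apply/funext => t; rewrite size_ramsey_add_isolated.
Qed.
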